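(* Let $E=\bigcup_{i\in I}\gamma_i+B_i^\oplus$ be a semi-simple expression over $\mathbb{N}^k$ and let $n=|I|\cdot\|E\|$. For each $j\in\{1,\dots,k\}$ define $p_j=\operatorname{lcm}(m_1,\dots,m_{|I|})$, where (indexing $I=\{1,\dots,|I|\}$) $m_i=m$ if $m\mathbf{e}_j\in B_i$ and $m_i=1$ otherwise. Then $p_j=O\big(e^{\sqrt{n\log n}}\big)$.
   Context: $\mathbb{N}$ includes $0$; $\mathbf{e}_j$ is the $j$-th unit vector. For finite $B\subseteq\mathbb{N}^k$, $B^\oplus$ is the set of $\mathbb{N}$-linear combinations of elements of $B$ and $\gamma+B^\oplus=\{\gamma+\sigma:\sigma\in B^\oplus\}$. $B$ is free if every element of $B^\oplus$ has a unique representation as such a combination. A semi-simple expression is a finite union of expressions $\gamma_i+B_i^\oplus$ with $B_i$ free and denoted sets pairwise disjoint. For $\sigma=(b_1,\dots,b_k)$, $\|\sigma\|=\max_j b_j$; for $B\subseteq\mathbb{N}^k$, $\|B\|=\max_{\sigma\in B}\|\sigma\|$; and $\|E\|=\max(\max_{i\in I}\|\gamma_i\|,\max_{i\in I}\|B_i\|,2)$. (Each free basis $B_i$ contains at most one element of the form $m\mathbf{e}_j$ for fixed $j$.) *)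

From mathcomp Require Import all_boot.
From Stdlib Require Import Reals.
Set Implicit Arguments. Unset Strict Implicit. Unset Printing Implicit Defensive.

Definition vec (k : nat) := {ffun 'I_k -> nat}.

Definition vadd k (u v : vec k) : vec k := [ffun j => u j + v j].

Definition unitv k (j : 'I_k) (m : nat) : vec k := [ffun l => if l == j then m else 0].

Definition lincomb k (B : seq (vec k)) (c : 'I_(size B) -> nat) : vec k :=
  [ffun l => \sum_(t < size B) c t * (tnth (in_tuple B) t) l].

Definition in_linset k (gamma : vec k) (B : seq (vec k)) (sigma : vec k) : Prop :=
  exists c : 'I_(size B) -> nat, sigma = vadd gamma (lincomb c).

(* B (listed without repetition) is free: unique representations *)
Definition free k (B : seq (vec k)) : Prop :=
  uniq B /\
  forall c c' : 'I_(size B) -> nat, lincomb c = lincomb c' -> forall t, c t = c' t.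

Definition semi_simple k N (gamma : 'I_N -> vec k) (B : 'I_N -> seq (vec k)) : Prop :=
  (forall i, free (B i)) /\
  (forall i i' sigma, i != i' ->
     in_linset (gamma i) (B i) sigma -> in_linset (gamma i') (B i') sigma -> False).

Definition vnorm k (v : vec k) : nat := \max_(l < k) v l.
Definition snorm k (B : seq (vec k)) : nat := \max_(b <- B) vnorm b.
Definition Enorm k N (gamma : 'I_N -> vec k) (B : 'I_N -> seq (vec k)) : nat :=
  maxn (maxn (\max_(i < N) vnorm (gamma i)) (\max_(i < N) snorm (B i))) 2.

Definition mcoef k (B : seq (vec k)) (j : 'I_k) (m : nat) : Prop :=
  unitv j m \in B \/ ((forall m', unitv j m' \notin B) /\ m = 1).

From Stdlib Require Import Reals Lra Psatz.
From mathcomp Require Import all_boot zify.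
Set Implicit Arguments. Unset Strict Implicit. Unset Printing Implicit Defensive.

(* Every m_i is at most M := ||E||, so p_j <= M^|I| and p_j divides lcm(1..M) <= 4^M.
   The Chebyshev-type bound lcm(1..M) <= 4^M follows by halving M = a + b, b <= a:
   lcm(1..a+b) divides lcm(1..a) * C(a+b, b), because a prime power p^e <= a+b
   exceeding the largest power p^f <= a forces e - f carries when adding a and b
   in base p, and C(a+b, b) <= 4^b.  With l = ln p_j we get l <= |I| ln M and
   l <= 3/2 M; splitting on M <= |I|^2 yields l^2 <= n ln n, i.e. p_j <= e^sqrt(n ln n). *)

Definition lcm_upto m := \big[lcmn/1%N]_(d < m) d.+1.

Lemma lcm_upto_gt0 m : 0 < lcm_upto m.
Proof. by rewrite /lcm_upto; elim/big_ind: _ => // x y; rewrite lcmn_gt0 => -> ->. Qed.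

Lemma dvdn_lcm_upto d m : 0 < d <= m -> d %| lcm_upto m.
Proof.
case/andP=> d_gt0 le_dm; have lt_d1m : d.-1 < m by rewrite prednK.
by apply: (biglcmn_sup (Ordinal lt_d1m)); rewrite //= prednK.
Qed.

Lemma logn_fact_wide p n R : prime p -> n < R ->
  logn p n`! = \sum_(1 <= i < R) n %/ p ^ i.
Proof.
move=> p_pr lt_nR; rewrite logn_fact // [RHS](@big_cat_nat _ _ _ n.+1) //=.
rewrite [X in _ = _ + X]big_nat_cond [X in _ = _ + X]big1 ?addn0 //.
move=> i /andP[/andP[le_ni _] _].
by rewrite divn_small // (leq_trans le_ni) // ltnW // ltn_expl // prime_gt1.
Qed.

(* Legendre's formula; the summands count the carries of a + b in base p. *)
Lemma logn_bin p a b : prime p ->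
  logn p 'C(a + b, b) =
    \sum_(1 <= i < (a + b).+1) ((a + b) %/ p ^ i - a %/ p ^ i - b %/ p ^ i).
Proof.
move=> p_pr; set S := \sum_(_ <= i < _) _.
have le_div i : a %/ p ^ i + b %/ p ^ i <= (a + b) %/ p ^ i.
  by rewrite divnD ?expn_gt0 ?prime_gt0 // leq_addr.
have sumS : S + \sum_(1 <= i < (a + b).+1) (a %/ p ^ i + b %/ p ^ i)
            = \sum_(1 <= i < (a + b).+1) (a + b) %/ p ^ i.
  by rewrite /S -big_split; apply: eq_bigr => i _ /=; rewrite -subnDA subnK.
have := bin_fact (leq_addl a b); rewrite addnK => /(congr1 (logn p)).
rewrite !lognM ?muln_gt0 ?fact_gt0 ?bin_gt0 ?leq_addl // => fact_eq.
apply/eqP; rewrite -(eqn_add2r (\sum_(1 <= i < (a + b).+1) (a %/ p ^ i + b %/ p ^ i))).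
rewrite sumS big_split /= -!logn_fact_wide ?ltnS ?leq_addl ?leq_addr //.
by rewrite -fact_eq (addnC (logn p a`!)).
Qed.

(* Every exponent in (f, e] produces a carry when adding a and b in base p. *)
Lemma pfactor_dvdn_bin p a b e f : prime p -> b <= a -> a < p ^ f.+1 ->
  p ^ e <= a + b -> p ^ (e - f) %| 'C(a + b, b).
Proof.
move=> p_pr le_ba lt_a_pf le_pe_ab; have p_gt1 := prime_gt1 p_pr.
rewrite pfactor_dvdn ?bin_gt0 ?leq_addl // logn_bin //.
have carry i : f < i <= e -> 1 <= (a + b) %/ p ^ i - a %/ p ^ i - b %/ p ^ i.
  case/andP=> lt_fi le_ie; have lt_a_pi : a < p ^ i.
    by rewrite (leq_trans lt_a_pf) // leq_pexp2l ?prime_gt0.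
  rewrite (divn_small lt_a_pi) (divn_small (leq_ltn_trans le_ba lt_a_pi)) !subn0.
  rewrite divn_gt0 ?expn_gt0 ?prime_gt0 //.
  by rewrite (leq_trans _ le_pe_ab) // leq_pexp2l ?prime_gt0.
have le_e_ab : e <= a + b by rewrite (leq_trans _ le_pe_ab) // ltnW // ltn_expl.
have sub_range : {subset index_iota f.+1 e.+1 <= index_iota 1 (a + b).+1}.
  by move=> i; rewrite !mem_index_iota; lia.
have sum_carries :
    e - f <= \sum_(f.+1 <= i < e.+1) ((a + b) %/ p ^ i - a %/ p ^ i - b %/ p ^ i).
  rewrite -subSS -[_ - _]muln1 -sum_nat_const_nat big_nat_cond [X in _ <= X]big_nat_cond.
  by apply: leq_sum => i /andP[/andP[lt_fi lt_ie] _]; apply: carry; rewrite lt_fi.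
apply: leq_trans sum_carries (uniq_sub_le_big (op := addn) (x := 0) leqnn
  (fun x y => leq_addr y x) xpredT _ (iota_uniq _ _) (iota_uniq _ _) sub_range).
Qed.

Lemma pfactor_dvdn_lcm_upto_bin p e a b : prime p -> b <= a -> p ^ e <= a + b ->
  p ^ e %| lcm_upto a * 'C(a + b, b).
Proof.
move=> p_pr le_ba le_pe_ab; have p_gt1 := prime_gt1 p_pr.
have pe_gt0 : 0 < p ^ e by rewrite expn_gt0 prime_gt0.
have a_gt0 : 0 < a by lia.
set f := trunc_log p a.
have le_e : e <= f + (e - f) by rewrite -leq_subLR.
rewrite (dvdn_trans (dvdn_exp2l p le_e)) // expnD dvdn_mul //.
  by rewrite dvdn_lcm_upto // expn_gt0 ltnW //= trunc_logP.
by rewrite pfactor_dvdn_bin // trunc_log_ltn.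
Qed.

Lemma lcm_upto_dvd_bin a b : b <= a -> lcm_upto (a + b) %| lcm_upto a * 'C(a + b, b).
Proof.
move=> le_ba; apply/dvdn_biglcmP => d _.
have le_dab : d.+1 <= a + b := ltn_ord d.
apply/dvdn_partP => // p; rewrite mem_primes => /and3P[p_pr _ _].
rewrite p_part pfactor_dvdn_lcm_upto_bin // (leq_trans _ le_dab) //.
exact: dvdn_leq (pfactor_dvdnn _ _).
Qed.

Lemma sum_bin_le_exp2 (s : seq nat) n : uniq s -> all (fun i => i <= n) s ->
  \sum_(i <- s) 'C(n, i) <= 2 ^ n.
Proof.
move=> s_uniq /allP s_le_n.
have -> : 2 ^ n = \sum_(i <- index_iota 0 n.+1) 'C(n, i).
  rewrite -[2]/(1 + 1) expnDn big_mkord.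
  by apply: eq_bigr => i _; rewrite !exp1n !muln1.
apply: (uniq_sub_le_big (op := addn) (x := 0) leqnn (fun x y => leq_addr y x)) => //.
  exact: iota_uniq.
by move=> i /s_le_n le_in; rewrite mem_index_iota.
Qed.

Lemma bin_half_le m : 'C(m, m./2) <= 4 ^ m./2.
Proof.
set b := m./2; rewrite -[m]odd_double_half -/b.
have -> : 4 ^ b = 2 ^ b.*2 by rewrite -mul2n expnM.
have le_b_2b : b <= b.*2 by rewrite -addnn leq_addr.
case: (odd m) => /=; last first.
  by have := @sum_bin_le_exp2 [:: b] b.*2; rewrite big_seq1 /= le_b_2b; apply.
have sym : 'C(b.*2.+1, b.+1) = 'C(b.*2.+1, b).
  by rewrite -bin_sub ?ltnS // subSS -addnn addnK.
have := @sum_bin_le_exp2 [:: b; b.+1] b.*2.+1.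
rewrite big_cons big_seq1 sym addnn expnS -[X in X <= _]mul2n leq_pmul2l //.
by rewrite add1n; apply; rewrite /= ?inE ?(ltn_eqF (ltnSn b)) ?ltnS ?le_b_2b ?leqW.
Qed.

Lemma lcm_upto_le m : lcm_upto m <= 4 ^ m.
Proof.
elim/ltn_ind: m => m IH; case: (leqP m 1) => [|lt_1m].
  by case: m {IH} => [|[|]] // _; rewrite /lcm_upto ?big_ord0 ?big_ord1.
set a := uphalf m; set b := m./2.
have m_ab : m = a + b by rewrite /a uphalf_half -addnA addnn odd_double_half.
have le_ba : b <= a by rewrite /a uphalf_half leq_addl.
have lt_am : a < m by rewrite /a uphalfE ltn_half_double -addnn; lia.
rewrite {1}m_ab; apply: leq_trans (dvdn_leq _ (lcm_upto_dvd_bin le_ba)) _.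
  by rewrite muln_gt0 lcm_upto_gt0 bin_gt0 leq_addl.
by rewrite [in X in _ <= X]m_ab expnD leq_mul ?IH // -m_ab bin_half_le.
Qed.

Lemma biglcmn_le_exp (I : finType) (F : I -> nat) M :
  (forall i, F i <= M) -> \big[lcmn/1]_(i : I) F i <= M ^ #|I|.
Proof.
move=> le_FM; rewrite -prod_nat_const.
apply: (big_ind2 (fun x y => x <= y)) => // x1 x2 y1 y2 le_x le_y.
by rewrite (leq_trans (leq_div _ _)) // leq_mul.
Qed.

Lemma biglcmn_le_exp4 (I : finType) (F : I -> nat) M :
  (forall i, F i <= M) -> \big[lcmn/1]_(i : I) F i <= 4 ^ M.
Proof.
move=> le_FM; apply: leq_trans (lcm_upto_le M); set L := \big[lcmn/1]_(i : I) F i.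
have [-> // | L_gt0] := posnP L.
apply/dvdn_leq/dvdn_biglcmP => [|i _]; first exact: lcm_upto_gt0.
have F_dvd_L : F i %| L by apply: (biglcmn_sup i).
rewrite dvdn_lcm_upto // le_FM lt0n andbT.
by apply: contraTneq F_dvd_L => ->; rewrite dvd0n -lt0n.
Qed.

Lemma unitv_le_snorm k (B : seq (vec k)) j m : unitv j m \in B -> m <= snorm B.
Proof.
move=> B_jm; apply: leq_trans (leq_bigmax_seq (F := @vnorm k) _ B_jm isT).
by apply: leq_trans (leq_bigmax j); rewrite ffunE eqxx.
Qed.

Lemma Enorm_ge2 k N (gamma : 'I_N -> vec k) (B : 'I_N -> seq (vec k)) :
  2 <= Enorm gamma B.
Proof. exact: leq_maxr. Qed.

Lemma mcoef_le_Enorm k N (gamma : 'I_N -> vec k) (B : 'I_N -> seq (vec k)) i j m :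
  mcoef (B i) j m -> m <= Enorm gamma B.
Proof.
case=> [B_jm | [_ ->]]; last exact: leq_trans (Enorm_ge2 gamma B).
apply: leq_trans (unitv_le_snorm B_jm) _.
apply: leq_trans (leq_bigmax (F := fun i => snorm (B i)) i) _.
by rewrite /Enorm !leq_max leqnn orbT.
Qed.

Local Open Scope R_scope.

Lemma ln_le x y : 0 < x -> x <= y -> ln x <= ln y.
Proof. by move=> x_gt0 [/(ln_increasing _ _ x_gt0)/Rlt_le | ->] //; apply: Rle_refl. Qed.

Lemma exp_le x y : x <= y -> exp x <= exp y.
Proof. by move=> [/exp_increasing/Rlt_le | ->] //; apply: Rle_refl. Qed.

Lemma ln_le_sub1 x : 0 < x -> ln x <= x - 1.
Proof. by move=> x_gt0; have := exp_ineq1_le (ln x); rewrite exp_ln //; lra. Qed.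

Lemma ln_le_sqrt x : 0 < x -> ln x <= sqrt x.
Proof.
move=> x_gt0; set s := sqrt x; set t := sqrt s.
have s_gt0 : 0 < s by apply: sqrt_lt_R0.
have t_gt0 : 0 < t by apply: sqrt_lt_R0.
have ss : s * s = x by apply: sqrt_sqrt; lra.
have tt : t * t = s by apply: sqrt_sqrt; lra.
have -> : ln x = 4 * ln t by rewrite -ss -tt !ln_mult ?tt //; ring.
have ln_t := ln_le_sub1 t_gt0; have := pow2_ge_0 (t - 2); nra.
Qed.

(* 4 <= (1 + 1/8)^12 <= exp (1/8)^12 = exp (3/2) *)
Lemma ln4_le : ln 4 <= 3 / 2.
Proof.
have y_ge := exp_ineq1_le (/ 8).
have le12 : (1 + / 8) ^ 12 <= exp (/ 8) ^ 12 by apply: pow_incr; lra.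
have : ln 4 <= ln (exp (/ 8) ^ 12) by apply: ln_le; rewrite /= in le12 *; lra.
by rewrite ln_pow ?ln_exp /=; [lra | apply: exp_pos].
Qed.

Lemma sqr_le_mul_ln n m l : 1 <= n -> 1 <= m -> 0 <= l ->
  l <= n * ln m -> l <= 3 / 2 * m -> l * l <= n * m * ln (n * m).
Proof.
move=> n_ge1 m_ge1 l_ge0 l_le_nlnm l_le_32m.
have ln_n_ge0 : 0 <= ln n by rewrite -ln_1; apply: ln_le; lra.
have ln_m_ge0 : 0 <= ln m by rewrite -ln_1; apply: ln_le; lra.
rewrite ln_mult; try lra.
have [le_m_nn | lt_nn_m] := Rle_or_lt m (n * n).
  have ln_m_le : ln m <= ln n + ln n by rewrite -ln_mult; try lra; apply: ln_le; lra.
  have : l * l <= n * ln m * (3 / 2 * m) by apply: Rmult_le_compat.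
  have : 0 <= n * m by nra.
  nra.
have le_n_sqrtm : n <= sqrt m.
  by rewrite -(sqrt_square n); [apply: sqrt_le_1_alt | ]; lra.
have sqrtm_sq : sqrt m * sqrt m = m by apply: sqrt_sqrt; lra.
have ln_m_le : ln m <= sqrt m by apply: ln_le_sqrt; lra.
have l_le_m : l <= m by nra.
have : l * l <= m * (n * ln m) by apply: Rmult_le_compat.
have : 0 <= n * m * ln n by apply: Rmult_le_pos; nra.
nra.
Qed.

Lemma INR_expn m n : INR (m ^ n) = INR m ^ n.
Proof. by elim: n => [|n IHn] //; rewrite expnS mult_INR IHn. Qed.

Lemma one_le_exp_sqrt x : 1 <= exp (sqrt x).
Proof. by have := exp_ineq1_le (sqrt x); have := sqrt_pos x; lra. Qed.

Lemma INR_le_exp_sqrt_nlogn (L M N : nat) :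
  (0 < M)%N -> (L <= M ^ N)%N -> (L <= 4 ^ M)%N ->
  INR L <= exp (sqrt (INR (N * M) * ln (INR (N * M)))).
Proof.
move=> M_gt0 le_L_MN le_L_4M.
have [-> | L_gt0] := posnP L; first exact: Rlt_le (exp_pos _).
have [N0 | N_gt0] := posnP N.
  suff -> : L = 1%N by apply: one_le_exp_sqrt.
  by apply/eqP; rewrite eqn_leq L_gt0 andbT -(expn0 M) -N0.
have INR_ge1 k : (0 < k)%N -> 1 <= INR k by move=> /leP/(le_INR 1).
have ln_le_INR k : (L <= k)%N -> ln (INR L) <= ln (INR k).
  by move=> /leP/le_INR; apply: ln_le; apply: lt_0_INR; apply/leP.
have ln_L_ge0 : 0 <= ln (INR L) by rewrite -ln_1; apply: ln_le; [lra | apply: INR_ge1].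
rewrite -(exp_ln (INR L)); last exact/lt_0_INR/leP.
apply/exp_le; rewrite -(sqrt_square (ln (INR L))) //; apply/sqrt_le_1_alt.
have M_pos : 0 < INR M by apply: lt_0_INR; apply/leP.
rewrite mult_INR; apply: sqr_le_mul_ln => //; try exact: INR_ge1.
  by have := ln_le_INR _ le_L_MN; rewrite INR_expn ln_pow.
have INR4 : INR 4 = 4 by rewrite /=; lra.
have := ln_le_INR _ le_L_4M; rewrite INR_expn ln_pow INR4; last lra.
have := ln4_le; nra.
Qed.

Theorem mainTheorem9 :
  exists (C : R) (n0 : nat),
  forall (k N : nat) (gamma : 'I_N -> vec k) (B : 'I_N -> seq (vec k)),
    semi_simple gamma B ->
    forall (j : 'I_k) (m : 'I_N -> nat),
      (forall i, mcoef (B i) j (m i)) ->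
      let n := (N * Enorm gamma B)%nat in
      (n0 <= n)%nat ->
      (INR (\big[lcmn/1%nat]_(i < N) m i) <= C * exp (sqrt (INR n * ln (INR n))))%R.
Proof.
exists 1, 0%N => k N gamma B _ j m m_coef n _.
have m_le i : (m i <= Enorm gamma B)%N := mcoef_le_Enorm gamma (m_coef i).
rewrite Rmult_1_l; apply: INR_le_exp_sqrt_nlogn.
- exact: leq_trans (Enorm_ge2 gamma B).
- by have := biglcmn_le_exp m_le; rewrite card_ord.
- exact: biglcmn_le_exp4.
Qed.
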